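(* Let $\alpha \in \mathbb{R}$ be such that $\alpha/(2\pi)$ is an algebraic irrational number. For $\phi \in \mathbb{R}$ and $\epsilon>0$ define the gate complexity of $e^{i\phi}\in U(1)$ with respect to the single gate $e^{i\alpha}$ by $$C_\epsilon(\phi) = \min\{|n| : n \in \mathbb{Z},\ |e^{i\phi}-e^{in\alpha}|<\epsilon\}.$$ Then for every $\phi \in [0,2\pi)$ and every $\delta>0$ there exists $\phi'$ with $|\phi'-\phi|<\delta$ such that $$\log C_\epsilon(\phi') > \frac{1}{3}\log\left(\frac{1}{\epsilon}\right) + \mathcal{O}(\epsilon^0) \quad \text{as } \epsilon \to 0,$$ i.e. there is a constant $c$ (depending on $\alpha$ and $\phi'$) such that $\log C_\epsilon(\phi') > \frac13 \log(1/\epsilon) + c$ for all sufficiently small $\epsilon>0$.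
   Context: Since $\alpha/\pi$ is irrational, the set $\{e^{in\alpha}: n\in\mathbb{Z}\}$ is dense in $U(1)$, so $C_\epsilon(\phi)$ is finite for every $\epsilon>0$. *)

From Stdlib Require Import Reals ZArith.
Open Scope R_scope.

Definition is_algebraic (x : R) : Prop :=
  exists (n : nat) (a : nat -> Z),
    a n <> 0%Z /\ sum_f_R0 (fun i => IZR (a i) * x ^ i) n = 0.

Definition is_irrational (x : R) : Prop :=
  ~ exists (p q : Z), q <> 0%Z /\ x = IZR p / IZR q.

(* |e^{i a} - e^{i b}| written via real and imaginary parts. *)
Definition unit_dist (a b : R) : R :=
  sqrt ((cos a - cos b) ^ 2 + (sin a - sin b) ^ 2).

Definition is_gate_complexity (alpha eps phi : R) (k : nat) : Prop :=
  (exists n : Z, Z.abs_nat n = k /\ unit_dist phi (IZR n * alpha) < eps) /\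
  (forall n : Z, unit_dist phi (IZR n * alpha) < eps -> (k <= Z.abs_nat n)%nat).

From Stdlib Require Import Reals ZArith Lra Lia Classical List Wf_nat.
Open Scope R_scope.

(* Write phi = 2 pi t and alpha = 2 pi x.  Modulo 1, the intervals of radius
   c / ((|n|+1)(|n|+2)) around the points n x have total length less than 3c (the radii
   telescope), so by compactness some t in any interval of length 4c avoids all of them.
   For such a t, every n with |e^{i 2 pi t} - e^{i n alpha}| < eps satisfies
   c / ((|n|+1)(|n|+2)) < eps, whence C_eps(2 pi t) >= sqrt (c / (6 eps)): the exponent is
   even 1/2.  Irrationality of x only serves to make C_eps finite (density of Z x + Z). *)

Lemma PI_gt_3 : 3 < PI.
Proof. pose proof PI2_3_2. lra. Qed.

Lemma cos_period_Z (y : R) (j : Z) : cos (y + 2 * IZR j * PI) = cos y.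
Proof.
  destruct j as [|p|p].
  - f_equal. ring.
  - rewrite <- (positive_nat_Z p), <- INR_IZR_INZ. apply cos_period.
  - rewrite <- (cos_period _ (Pos.to_nat p)), INR_IZR_INZ, positive_nat_Z.
    f_equal. rewrite <- Pos2Z.opp_pos, opp_IZR. ring.
Qed.

Lemma cos_ge_1_sub_sqr_div2 (y : R) : 1 - y ^ 2 / 2 <= cos y.
Proof.
  pose proof (COS_bound y) as Hcos.
  destruct (Rle_lt_dec (-2) y); [destruct (Rle_lt_dec y 2)|]; try nra.
  destruct (pre_cos_bound y 0) as [H _]; try lra.
  unfold cos_approx, cos_term in H. simpl in H. lra.
Qed.

Lemma cos_le_1_sub_sqr_div4 (y : R) : -2 <= y <= 2 -> cos y <= 1 - y ^ 2 / 4.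
Proof.
  intro Hy. destruct (pre_cos_bound y 0) as [_ H]; try lra.
  unfold cos_approx, cos_term in H. simpl in H.
  assert (y ^ 2 <= 4) by nra. nra.
Qed.

Lemma unit_dist_chord (a b : R) : unit_dist a b = sqrt (2 - 2 * cos (a - b)).
Proof.
  unfold unit_dist. f_equal. rewrite cos_minus.
  pose proof (sin2_cos2 a). pose proof (sin2_cos2 b). unfold Rsqr in *. nra.
Qed.

Lemma unit_dist_shift (a b : R) (j : Z) : unit_dist a (b + 2 * IZR j * PI) = unit_dist a b.
Proof.
  rewrite !unit_dist_chord, <- (cos_period_Z (a - (b + 2 * IZR j * PI)) j).
  do 4 f_equal. ring.
Qed.

Lemma unit_dist_le_abs (a b : R) : unit_dist a b <= Rabs (a - b).
Proof.
  rewrite unit_dist_chord, <- sqrt_Rsqr_abs. apply sqrt_le_1_alt.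
  pose proof (cos_ge_1_sub_sqr_div2 (a - b)). unfold Rsqr. lra.
Qed.

Lemma unit_dist_turns_le (a b : R) (j : Z) :
  unit_dist (2 * PI * a) (2 * PI * b) <= 2 * PI * Rabs (a - b - IZR j).
Proof.
  pose proof PI_gt_3.
  rewrite <- (unit_dist_shift _ _ j).
  replace (2 * PI * Rabs (a - b - IZR j))
    with (Rabs (2 * PI * a - (2 * PI * b + 2 * IZR j * PI))).
  - apply unit_dist_le_abs.
  - replace (2 * PI * a - (2 * PI * b + 2 * IZR j * PI)) with (2 * PI * (a - b - IZR j)) by ring.
    rewrite Rabs_mult, (Rabs_pos_eq (2 * PI)) by lra. reflexivity.
Qed.

Lemma nearest_integer (u : R) : exists j : Z, Rabs (u - IZR j) <= 1 / 2.
Proof.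
  exists (Int_part (u + 1 / 2)).
  destruct (base_Int_part (u + 1 / 2)). apply Rabs_le. lra.
Qed.

Lemma unit_dist_turns_ge (a b rho : R) : 0 <= rho <= 1 / 16 ->
  (forall j : Z, rho <= Rabs (a - b - IZR j)) ->
  rho <= unit_dist (2 * PI * a) (2 * PI * b).
Proof.
  intros Hrho Hsep. pose proof PI_gt_3. pose proof PI_4.
  destruct (nearest_integer (a - b)) as [j Hj].
  set (v := Rabs (a - b - IZR j)). specialize (Hsep j). fold v in Hsep, Hj.
  assert (Hcos : cos (2 * PI * a - 2 * PI * b) = cos (2 * PI * v)).
  { rewrite <- (cos_period_Z _ (- j)), opp_IZR.
    replace (2 * PI * a - 2 * PI * b + 2 * - IZR j * PI) with (2 * PI * (a - b - IZR j)) by ring.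
    unfold v, Rabs. destruct Rcase_abs; [rewrite <- cos_neg; f_equal|]; ring. }
  assert (Hmono : cos (2 * PI * v) <= cos (2 * PI * rho)) by (apply cos_decr_1; nra).
  assert (Hquad : cos (2 * PI * rho) <= 1 - (2 * PI * rho) ^ 2 / 4)
    by (apply cos_le_1_sub_sqr_div4; nra).
  assert (Hpi : 9 * rho ^ 2 <= PI ^ 2 * rho ^ 2) by (apply Rmult_le_compat_r; nra).
  rewrite unit_dist_chord, <- (sqrt_pow2 rho) by lra. apply sqrt_le_1_alt.
  rewrite Hcos. nra.
Qed.

Definition lattice_point (x z : R) : Prop := exists n j : Z, z = IZR n * x + IZR j.

Lemma lattice_point_sub (x a b : R) :
  lattice_point x a -> lattice_point x b -> lattice_point x (a - b).
Proof.
  intros [n1 [j1 ->]] [n2 [j2 ->]]. exists (n1 - n2)%Z, (j1 - j2)%Z.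
  rewrite !minus_IZR. ring.
Qed.

Lemma lattice_point_mulZ (x a : R) (m : Z) : lattice_point x a -> lattice_point x (IZR m * a).
Proof.
  intros [n [j ->]]. exists (m * n)%Z, (m * j)%Z. rewrite !mult_IZR. ring.
Qed.

Lemma exists_floor_multiple (g z : R) : 0 < g -> exists q : Z, 0 <= z - IZR q * g < g.
Proof.
  intro Hg. exists (Int_part (z / g)).
  destruct (base_Int_part (z / g)) as [H1 H2].
  assert (E : z = z / g * g) by (field; lra).
  split; rewrite E at 1; nra.
Qed.

Section LatticeWithGap.

Variables (x e : R).
Hypothesis e_pos : 0 < e.
Hypothesis lattice_gap : forall z, lattice_point x z -> 0 < z -> e <= z.

Lemma lattice_gap_inf : exists g, e <= g /\
  (forall z, lattice_point x z -> 0 < z -> g <= z) /\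
  (forall eta, 0 < eta -> exists z, lattice_point x z /\ 0 < z < g + eta).
Proof.
  set (U := fun u => exists z, lattice_point x z /\ 0 < z /\ u = - z).
  assert (Hbound : bound U).
  { exists (- e). intros u [z [Lz [Hz ->]]]. specialize (lattice_gap z Lz Hz). lra. }
  assert (Hinh : exists u, U u).
  { exists (-1), 1. split; [exists 0%Z, 1%Z; simpl; ring | lra]. }
  destruct (completeness U Hbound Hinh) as [m [Hub Hlub]].
  exists (- m). split; [|split].
  - enough (m <= - e) by lra. apply Hlub.
    intros u [z [Lz [Hz ->]]]. specialize (lattice_gap z Lz Hz). lra.
  - intros z Lz Hz. enough (- z <= m) by lra. apply Hub. exists z. auto.
  - intros eta Heta. apply NNPP. intro Hnone.
    enough (m <= m - eta) by lra. apply Hlub.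
    intros u [z [Lz [Hz ->]]]. apply Rnot_lt_le. intro Hlt.
    apply Hnone. exists z. repeat split; auto; lra.
Qed.

Lemma lattice_gap_generator : exists g, 0 < g /\
  forall z, lattice_point x z -> exists q : Z, z = IZR q * g.
Proof.
  destruct lattice_gap_inf as [g [Heg [Hinf Happrox]]].
  assert (Lg : lattice_point x g).
  { destruct (Happrox g) as [z1 [L1 H1]]; [lra|].
    assert (g <= z1) by (apply Hinf; tauto).
    destruct (Req_dec z1 g) as [<-|Hne]; [exact L1|].
    destruct (Happrox (z1 - g)) as [z2 [L2 H2]]; [lra|].
    assert (g <= z2) by (apply Hinf; tauto).
    (* 0 < z1 - z2 < g contradicts the infimum. *)
    assert (g <= z1 - z2) by (apply Hinf; [apply lattice_point_sub | lra]; auto).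
    lra. }
  exists g. split; [lra|]. intros z Lz.
  destruct (exists_floor_multiple g z) as [q Hq]; [lra|]. exists q.
  destruct (Req_dec (z - IZR q * g) 0) as [E|E]; [lra|].
  assert (g <= z - IZR q * g); [|lra].
  apply Hinf; [apply lattice_point_sub, lattice_point_mulZ | lra]; auto.
Qed.

Lemma lattice_gap_rational : exists p q : Z, q <> 0%Z /\ x = IZR p / IZR q.
Proof.
  destruct lattice_gap_generator as [g [Hg Hgen]].
  destruct (Hgen 1) as [q E1]; [exists 0%Z, 1%Z; simpl; ring|].
  destruct (Hgen x) as [p Ex]; [exists 1%Z, 0%Z; simpl; ring|].
  assert (Hq : IZR q <> 0) by (intro H0; rewrite H0 in E1; lra).
  exists p, q. split; [intro; subst q; auto|].
  assert (Eg : g = / IZR q).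
  { apply (Rmult_eq_reg_l (IZR q)); [|exact Hq]. rewrite Rinv_r; auto. }
  rewrite Ex, Eg. reflexivity.
Qed.

End LatticeWithGap.

Lemma lattice_dense (x : R) : is_irrational x ->
  forall t e, 0 < e -> exists n j : Z, Rabs (t - IZR n * x - IZR j) < e.
Proof.
  intros Hirr t e He.
  assert (Hsmall : exists d, lattice_point x d /\ 0 < d < e).
  { apply NNPP. intro Hnone. apply Hirr. apply (lattice_gap_rational x e He).
    intros z Lz Hz. apply Rnot_lt_le. intro Hlt. apply Hnone. exists z. auto. }
  destruct Hsmall as [d [Ld Hd]].
  destruct (exists_floor_multiple d t) as [m Hm]; [lra|].
  destruct (lattice_point_mulZ x d m Ld) as [n [j E]]. exists n, j.
  rewrite Rabs_pos_eq; lra.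
Qed.

Fixpoint total_length (l : list (R * R)) : R :=
  match l with
  | nil => 0
  | p :: l' => 2 * snd p + total_length l'
  end.

Lemma total_length_app l1 l2 : total_length (l1 ++ l2) = total_length l1 + total_length l2.
Proof. induction l1 as [|p l1 IH]; simpl; [ring | rewrite IH; ring]. Qed.

Lemma total_length_nonneg l : (forall p, In p l -> 0 <= snd p) -> 0 <= total_length l.
Proof.
  induction l as [|p l IH]; simpl; intro Hpos; [lra|].
  assert (0 <= snd p) by auto. assert (0 <= total_length l) by auto. lra.
Qed.

Lemma interval_cover_length (l : list (R * R)) (a b : R) : a <= b ->
  (forall p, In p l -> 0 <= snd p) ->
  (forall y, a <= y <= b -> exists p, In p l /\ Rabs (y - fst p) < snd p) ->
  b - a <= total_length l.
Proof.
  remember (length l) as n eqn:Hn. revert l Hn a b.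
  induction n as [|n IH]; intros l Hn a b Hab Hpos Hcov.
  - destruct l; [|discriminate]. destruct (Hcov a) as [p [[] _]]. lra.
  - (* remove an interval containing a; the others cover the rest of [a, b] *)
    destruct (Hcov a) as [p [Hp Ha]]; [lra|].
    destruct (in_split p l Hp) as [l1 [l2 ->]].
    apply Rabs_def2 in Ha.
    assert (Hpos' : forall q, In q (l1 ++ l2) -> 0 <= snd q)
      by (intros q Hq; apply Hpos; apply in_app_or in Hq; apply in_or_app; simpl; tauto).
    pose proof (total_length_nonneg _ Hpos').
    rewrite total_length_app in *. simpl.
    destruct (Rlt_le_dec b (fst p + snd p)) as [Hb|Hb]; [lra|].
    assert (IHr : b - (fst p + snd p) <= total_length (l1 ++ l2)).
    { apply IH; auto.
      - rewrite length_app in *. simpl in Hn. lia.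
      - intros y Hy. destruct (Hcov y) as [q [Hq Hyq]]; [lra|].
        exists q. split; auto.
        apply in_app_or in Hq. apply in_or_app. destruct Hq as [Hq|[<-|Hq]]; auto.
        apply Rabs_def2 in Hyq. lra. }
    rewrite total_length_app in IHr. lra.
Qed.

Lemma nat_list_bound (l : list R) : (forall r, In r l -> exists m, r = INR m) ->
  exists N, forall m, In (INR m) l -> (m <= N)%nat.
Proof.
  induction l as [|r l IH]; intro Hnat.
  - exists O. intros m [].
  - destruct (Hnat r) as [m0 ->]; [now left|].
    destruct IH as [N HN]; [intros; apply Hnat; now right|].
    exists (Nat.max m0 N). intros m [E|Hm].
    + apply INR_eq in E. lia.
    + specialize (HN m Hm). lia.
Qed.

Lemma compact_nat_cover (U : nat -> R -> Prop) (a b : R) :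
  (forall m y, U m y -> exists d : posreal, forall z, Rabs (z - y) < d -> U m z) ->
  (forall y, a <= y <= b -> exists m, U m y) ->
  exists N, forall y, a <= y <= b -> exists m, (m <= N)%nat /\ U m y.
Proof.
  intros Hopen Hcov.
  set (fam := mkfamily (fun r => exists m, r = INR m) (fun r z => exists m, r = INR m /\ U m z)
                ltac:(intros r [z [m [E _]]]; exists m; exact E)).
  assert (Hfam : covering_open_set (fun y => a <= y <= b) fam).
  { split.
    - intros y Hy. destruct (Hcov y Hy) as [m Hm]. exists (INR m), m. auto.
    - intros r z [m [-> Hz]]. destruct (Hopen m z Hz) as [d Hd].
      exists d. intros z' Hz'. exists m. auto. }
  destruct (compact_P3 a b fam Hfam) as [D [Hsub [l Hl]]].
  destruct (nat_list_bound l) as [N HN].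
  { intros r Hr. apply Hl in Hr. destruct Hr as [Hr _]. exact Hr. }
  exists N. intros y Hy. destruct (Hsub y Hy) as [r [[m [-> Hm]] HD]].
  exists m. split; [apply HN, Hl; split; [exists m|]|]; auto.
Qed.

Definition radius (c : R) (m : nat) : R := c / ((INR m + 1) * (INR m + 2)).

Lemma radius_pos (c : R) (m : nat) : 0 < c -> 0 < radius c m.
Proof.
  intro Hc. unfold radius. pose proof (pos_INR m). apply Rdiv_lt_0_compat; nra.
Qed.

Lemma radius_le_half (c : R) (m : nat) : 0 <= c -> radius c m <= c / 2.
Proof.
  intro Hc. unfold radius, Rdiv. pose proof (pos_INR m).
  apply Rmult_le_compat_l; [lra|]. apply Rinv_le_contravar; nra.
Qed.

Fixpoint sym_range (N : nat) : list Z :=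
  match N with
  | O => 0%Z :: nil
  | S M => Z.of_nat (S M) :: (- Z.of_nat (S M))%Z :: sym_range M
  end.

Lemma in_sym_range (N : nat) (n : Z) : (Z.abs_nat n <= N)%nat -> In n (sym_range N).
Proof.
  induction N as [|M IH]; intro Hn; simpl.
  - left. lia.
  - destruct (Nat.eq_dec (Z.abs_nat n) (S M)); [|right; right; apply IH; lia].
    destruct (Z_le_gt_dec 0 n); [left | right; left]; lia.
Qed.

(* c / ((m+1)(m+2)) = c / (m+1) - c / (m+2) telescopes. *)
Lemma total_length_radii (center : Z -> R) (c : R) (N : nat) :
  total_length (map (fun n => (center n, radius c (Z.abs_nat n))) (sym_range N))
  = 3 * c - 4 * c / (INR N + 2).
Proof.
  induction N as [|M IH].
  - simpl. unfold radius. simpl. field.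
  - simpl sym_range. simpl total_length. rewrite IH.
    rewrite SuccNat2Pos.id_succ. unfold radius.
    rewrite S_INR. pose proof (pos_INR M). field. lra.
Qed.

Lemma Int_part_shift (z s : R) (j : Z) :
  s <= z + IZR j < s + 1 -> z + IZR j = z - IZR (Int_part (z - s)).
Proof.
  intro H. rewrite <- (Int_part_spec (z - s) (- j)); [rewrite opp_IZR; ring|].
  rewrite opp_IZR. lra.
Qed.

Definition well_separated (x c t : R) : Prop :=
  forall n j : Z, radius c (Z.abs_nat n) <= Rabs (t - IZR n * x - IZR j).

Lemma exists_well_separated (x t0 w : R) : 0 < w <= 1 / 4 ->
  exists t, t0 <= t <= t0 + w /\ well_separated x (w / 4) t.
Proof.
  intro Hw. set (c := w / 4). assert (Hc : 0 < c) by (unfold c; lra).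
  apply NNPP. intro Hnone.
  set (U m y := exists n j : Z, Z.abs_nat n = m /\ Rabs (y - IZR n * x - IZR j) < radius c m).
  assert (Hcov : forall y, t0 <= y <= t0 + w -> exists m, U m y).
  { intros y Hy. apply NNPP. intro Hy'. apply Hnone. exists y. split; [exact Hy|].
    intros n j. apply Rnot_lt_le. intro Hlt. apply Hy'. exists (Z.abs_nat n), n, j. auto. }
  assert (Hopen : forall m y, U m y -> exists d : posreal, forall z, Rabs (z - y) < d -> U m z).
  { intros m y [n [j [Hm Hy]]].
    assert (Hd : 0 < radius c m - Rabs (y - IZR n * x - IZR j)) by lra.
    exists (mkposreal _ Hd). intros z Hz. exists n, j. split; [exact Hm|]. simpl in Hz.
    replace (z - IZR n * x - IZR j) with ((z - y) + (y - IZR n * x - IZR j)) by ring.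
    eapply Rle_lt_trans; [apply Rabs_triang|]. lra. }
  destruct (compact_nat_cover U t0 (t0 + w) Hopen Hcov) as [N HN].
  (* A translate n x + j within 1/32 of [t0, t0 + w] lies in [s, s + 1), so it is the
     representative of n x chosen below. *)
  set (s := t0 - 1 / 4).
  set (l := map (fun n => (IZR n * x - IZR (Int_part (IZR n * x - s)), radius c (Z.abs_nat n)))
                (sym_range N)).
  assert (Hl : forall y, t0 <= y <= t0 + w -> exists p, In p l /\ Rabs (y - fst p) < snd p).
  { intros y Hy. destruct (HN y Hy) as [m [HmN [n [j [<- Hyn]]]]].
    eexists. split; [apply in_map, in_sym_range, HmN|]. simpl.
    pose proof (radius_le_half c (Z.abs_nat n)). apply Rabs_def2 in Hyn.
    rewrite <- (Int_part_shift (IZR n * x) s j) by (unfold s, c in *; lra).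
    replace (y - (IZR n * x + IZR j)) with (y - IZR n * x - IZR j) by ring.
    apply Rabs_def1; lra. }
  assert (Hpos : forall p, In p l -> 0 <= snd p).
  { intros p Hp. apply in_map_iff in Hp. destruct Hp as [n [<- _]].
    left. apply radius_pos, Hc. }
  pose proof (interval_cover_length l t0 (t0 + w) ltac:(lra) Hpos Hl) as Hlen.
  unfold l in Hlen. rewrite total_length_radii in Hlen.
  assert (0 < 4 * c / (INR N + 2)) by (pose proof (pos_INR N); apply Rdiv_lt_0_compat; lra).
  unfold c in *. lra.
Qed.

Lemma gate_complexity_exists (x eps phi : R) : is_irrational x -> 0 < eps ->
  exists k, is_gate_complexity (2 * PI * x) eps phi k.
Proof.
  intros Hirr Heps. pose proof PI_gt_3.
  set (P k := exists n : Z, Z.abs_nat n = k /\ unit_dist phi (IZR n * (2 * PI * x)) < eps).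
  assert (HP : exists k, P k).
  { destruct (lattice_dense x Hirr (phi / (2 * PI)) (eps / (2 * PI))) as [n [j Hnj]].
    { apply Rdiv_lt_0_compat; lra. }
    exists (Z.abs_nat n), n. split; [reflexivity|].
    replace phi with (2 * PI * (phi / (2 * PI))) at 1 by (field; lra).
    replace (IZR n * (2 * PI * x)) with (2 * PI * (IZR n * x)) by ring.
    eapply Rle_lt_trans; [apply (unit_dist_turns_le _ _ j)|].
    replace eps with (2 * PI * (eps / (2 * PI))) by (field; lra).
    apply Rmult_lt_compat_l; lra. }
  destruct (dec_inh_nat_subset_has_unique_least_element P (fun k => classic (P k)) HP)
    as [k [[Pk Hmin] _]].
  exists k. split; [exact Pk|]. intros n Hn. apply Hmin. exists n. auto.
Qed.

Lemma radius_lt_inv (c eps : R) (k : nat) : 0 < c -> eps <= c / 2 ->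
  radius c k < eps -> c / 6 < eps * INR k ^ 2.
Proof.
  intros Hc Heps Hlt. unfold radius in Hlt.
  destruct k as [|k]; [simpl in Hlt; lra|].
  rewrite S_INR in *. pose proof (pos_INR k).
  set (D := (INR k + 1 + 1) * (INR k + 1 + 2)) in Hlt.
  assert (Hc_eq : c = c / D * D) by (unfold D; field; lra).
  assert (c < eps * D) by (unfold D in *; nra).
  unfold D in *. nra.
Qed.

Lemma gate_complexity_lower_bound (x c t eps : R) (k : nat) :
  0 < c <= 1 / 8 -> eps <= c / 2 -> well_separated x c t ->
  is_gate_complexity (2 * PI * x) eps (2 * PI * t) k -> c / 6 < eps * INR k ^ 2.
Proof.
  intros Hc Heps Hsep [[n [<- Hn]] _].
  apply radius_lt_inv; try lra.
  eapply Rle_lt_trans; [|exact Hn].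
  replace (IZR n * (2 * PI * x)) with (2 * PI * (IZR n * x)) by ring.
  pose proof (radius_le_half c (Z.abs_nat n)). pose proof (radius_pos c (Z.abs_nat n)).
  apply unit_dist_turns_ge; [lra|].
  intro j. exact (Hsep n j).
Qed.

Lemma ln_gt_third_ln_inv (a eps K : R) : 0 < a -> 0 < eps < 1 -> 0 <= K ->
  a < eps * K ^ 2 -> ln K > 1 / 3 * ln (1 / eps) + 1 / 2 * ln a.
Proof.
  intros Ha Heps HK0 HK.
  assert (HK2 : a * (1 / eps) < K ^ 2).
  { replace (K ^ 2) with (eps * K ^ 2 * (1 / eps)) by (field; lra).
    apply Rmult_lt_compat_r; [apply Rdiv_lt_0_compat|]; lra. }
  assert (Hinv : 1 < 1 / eps).
  { apply (Rmult_lt_reg_r eps); [lra|]. replace (1 / eps * eps) with 1 by (field; lra). lra. }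
  assert (HKpos : 0 < K) by (destruct HK0 as [|<-]; [|simpl in HK]; nra).
  apply ln_increasing in HK2; [|nra].
  rewrite ln_mult, ln_pow in HK2 by lra. simpl INR in HK2.
  assert (0 < ln (1 / eps)) by (rewrite <- ln_1; apply ln_increasing; lra).
  lra.
Qed.

Theorem proposition1 (alpha : R)
  (halg : is_algebraic (alpha / (2 * PI)))
  (hirr : is_irrational (alpha / (2 * PI))) :
  forall phi delta : R, 0 <= phi < 2 * PI -> 0 < delta ->
  exists phi' : R, Rabs (phi' - phi) < delta /\
    exists c : R, exists eps0 : R, 0 < eps0 /\
      forall eps : R, 0 < eps < eps0 ->
        exists k : nat, is_gate_complexity alpha eps phi' k /\
          ln (INR k) > (1 / 3) * ln (1 / eps) + c.
Proof.
  intros phi delta _ Hdelta. pose proof PI_gt_3.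
  set (x := alpha / (2 * PI)) in hirr.
  assert (Halpha : alpha = 2 * PI * x) by (unfold x; field; lra).
  set (w := Rmin (delta / (4 * PI)) (1 / 4)).
  assert (Hw : 0 < w <= 1 / 4).
  { split; [apply Rmin_glb_lt; [apply Rdiv_lt_0_compat|]|apply Rmin_r]; lra. }
  destruct (exists_well_separated x (phi / (2 * PI)) w Hw) as [t [Ht Hsep]].
  exists (2 * PI * t). split.
  { assert (Hwd : 2 * PI * w <= delta / 2).
    { replace (delta / 2) with (2 * PI * (delta / (4 * PI))) by (field; lra).
      apply Rmult_le_compat_l, Rmin_l. lra. }
    replace (2 * PI * t - phi) with (2 * PI * (t - phi / (2 * PI))) by (field; lra).
    rewrite Rabs_pos_eq; nra. }
  exists (1 / 2 * ln (w / 4 / 6)), (Rmin 1 (w / 8)).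
  split; [apply Rmin_glb_lt; lra|].
  intros eps [Heps Heps0].
  assert (eps < 1) by (eapply Rlt_le_trans; [exact Heps0 | apply Rmin_l]).
  assert (eps < w / 8) by (eapply Rlt_le_trans; [exact Heps0 | apply Rmin_r]).
  destruct (gate_complexity_exists x eps (2 * PI * t) hirr Heps) as [k Hk].
  rewrite Halpha. exists k. split; [exact Hk|].
  apply ln_gt_third_ln_inv; try lra; [apply pos_INR|].
  apply (gate_complexity_lower_bound x _ t eps k); [lra | lra | exact Hsep | exact Hk].
Qed.
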